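(* Let $m\ge2$ be even, $l\ge1$, and $V$ a finite-dimensional $\mathbb{K}$-vector space with ordered basis $(e_i)_{i\in B}$. Then $\mathrm{HPf}^{(m,l)}(V)\subseteq\mathrm{HPf}^{(m,l+1)}(V)$.
   Context: For $x\in\bigwedge^mV$ write $x=\sum_Ix_Ie_I$, where $e_I=e_{i_1}\wedge\dots\wedge e_{i_m}$ for $I=\{i_1<\dots<i_m\}\subseteq B$. For $A\subseteq B$ with $|A|=mk$, the hyper-Pfaffian form is $\mathrm{hpf}^{(m,k)}_A(x)=\sum\mathrm{sgn}(I_1,\dots,I_k)x_{I_1}\cdots x_{I_k}$, summed over unordered partitions $A=I_1\sqcup\dots\sqcup I_k$ into $m$-sets, where $\mathrm{sgn}(I_1,\dots,I_k)$ is the sign of the permutation of $A$ whose one-line form lists $I_1,\dots,I_k$ successively, each in increasing order. $\mathrm{HPf}^{(m,k)}(V)=\{x\in\bigwedge^mV:\mathrm{hpf}^{(m,k)}_A(x)=0\ \forall A\subseteq B,|A|=mk\}$. *)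

From HB Require Import structures.
From mathcomp Require Import all_boot all_order all_algebra.
Set Implicit Arguments. Unset Strict Implicit. Unset Printing Implicit Defensive.
Import GRing.Theory.
Local Open Scope ring_scope.

(* The ordered basis is (e_i)_{i in 'I_n}, ordered by the natural order on 'I_n.
   An element x of /\^m V is given by its coordinates x_I, I an m-subset of 'I_n;
   we represent it as x : {ffun {set 'I_n} -> K}; only the values x I with
   #|I| = m are ever used. *)

Section HPf.
Variables (K : fieldType) (n : nat).

Definition sorted_block (I : {set 'I_n}) : seq nat :=
  sort leq [seq val i | i in I].

Definition block_key (I : {set 'I_n}) : nat := head 0%N (sorted_block I).

Definition blocks_seq (P : {set {set 'I_n}}) : seq {set 'I_n} :=
  sort (fun I J => (block_key I <= block_key J)%N) (enum P).

Definition one_line (P : {set {set 'I_n}}) : seq nat :=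
  flatten [seq sorted_block B | B <- blocks_seq P].

Definition ninv (s : seq nat) : nat :=
  (\sum_(i < size s) \sum_(j < size s | (i < j)%N)
      (nth 0%N s j < nth 0%N s i)%N)%N.

(* Sign of the permutation of A whose one-line form is one_line P. *)
Definition part_sgn (P : {set {set 'I_n}}) : K := (-1) ^+ ninv (one_line P).

Definition hpf (m : nat) (A : {set 'I_n}) (x : {ffun {set 'I_n} -> K}) : K :=
  \sum_(P : {set {set 'I_n}} | partition P A && [forall I in P, #|I| == m])
     part_sgn P * \prod_(I in P) x I.

Definition HPf (m k : nat) (x : {ffun {set 'I_n} -> K}) : Prop :=
  forall A : {set 'I_n}, #|A| = (m * k)%N -> hpf m A x = 0.

End HPf.

From mathcomp Require Import all_boot all_order all_algebra.
From mathcomp Require Import zify.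
Set Implicit Arguments. Unset Strict Implicit. Unset Printing Implicit Defensive.

(* Expand hpf_A along the least element a0 of A, grouping the partitions of A
   by the block I containing a0.  Since blocks are listed by their least
   element, I comes first in the one-line form, so the sign of I |: P splits
   as the sign of moving I to the front of A times the sign of P, a partition
   of A :\: I.  Hence hpf^{(m,l+1)}_A(x) = sum_I +-x_I hpf^{(m,l)}_{A :\: I}(x),
   and every summand vanishes when x is in HPf^{(m,l)}. *)

Definition cross (s t : seq nat) : nat := \sum_(a <- s) count (fun b => b < a) t.

Lemma ninv_cons a s : ninv (a :: s) = count (fun b => b < a) s + ninv s.
Proof.
rewrite /ninv /= big_ord_recl /=; congr (_ + _).
  rewrite big_mkcond big_ord_recl /= add0n.
  elim: s => [|b s IH] /=; first by rewrite big_ord0.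
  by rewrite big_ord_recl /= -IH.
apply: eq_bigr => i _; rewrite big_mkcond big_ord_recl /= add0n [RHS]big_mkcond.
exact: eq_bigr.
Qed.

Lemma ninv_cat s t : ninv (s ++ t) = ninv s + ninv t + cross s t.
Proof.
elim: s => [|a s IH]; first by rewrite /ninv /cross big_ord0 big_nil addn0.
by rewrite cat_cons !ninv_cons IH /cross big_cons count_cat; lia.
Qed.

Lemma cross_perm_r s t t' : perm_eq t t' -> cross s t = cross s t'.
Proof. by move=> /permP eq_t; apply: eq_bigr => a _; rewrite eq_t. Qed.

Section Blocks.
Variable n : nat.
Implicit Types (I J : {set 'I_n}) (P : {set {set 'I_n}}).

Lemma perm_sorted_block J : perm_eq (sorted_block J) [seq val i | i in J].
Proof. by rewrite /sorted_block perm_sort. Qed.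

Lemma mem_sorted_block J i : (val i \in sorted_block J) = (i \in J).
Proof.
rewrite (perm_mem (perm_sorted_block J)) (mem_map val_inj); exact: mem_enum.
Qed.

Lemma block_key_mem J : J != set0 -> exists2 i, i \in J & block_key J = val i.
Proof.
case/set0Pn => i0 i0J.
have : block_key J \in sorted_block J.
  move: (i0J); rewrite -mem_sorted_block /block_key.
  by case: (sorted_block J) => //= h t _; rewrite mem_head.
rewrite (perm_mem (perm_sorted_block J)) => /mapP[i]; rewrite mem_enum => iJ ->.
by exists i.
Qed.

Lemma block_key_min J i : i \in J -> block_key J <= val i.
Proof.
rewrite -mem_sorted_block.
have : sorted leq (sorted_block J) by apply: sort_sorted; exact: leq_total.
rewrite /block_key; case: (sorted_block J) => [|h t] //= srt.
rewrite inE => /predU1P[-> //|it].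
exact: (allP (order_path_min leq_trans srt)).
Qed.

Lemma block_key_inj P D : partition P D -> {in P &, injective (@block_key n)}.
Proof.
move=> partP J J' JP J'P eq_key.
have [i iJ ki] := block_key_mem (partition_neq0 partP JP).
have [i' iJ' ki'] := block_key_mem (partition_neq0 partP J'P).
have eq_i : i = i' by apply: val_inj; rewrite -ki -ki'.
rewrite -{}eq_i in iJ'.
have tiP := partition_trivIset partP.
by rewrite -(def_pblock tiP JP iJ) (def_pblock tiP J'P iJ').
Qed.

Lemma perm_blocks_seq P : perm_eq (blocks_seq P) (enum P).
Proof. by rewrite /blocks_seq perm_sort. Qed.

Lemma count_sorted_block (p : pred nat) J :
  count p (sorted_block J) = \sum_(i in J | p (val i)) 1.
Proof.
by rewrite (permP (perm_sorted_block J)) -sum1_count big_map big_enum_cond.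
Qed.

Lemma one_line_perm P D : partition P D -> perm_eq (one_line P) [seq val i | i in D].
Proof.
move=> partP; apply/permP => p.
rewrite -(permP (perm_sorted_block D)) count_sorted_block.
rewrite (set_partition_big_cond P partP) count_flatten sumnE !big_map.
rewrite (perm_big _ (perm_blocks_seq P)) big_enum /=.
by apply: eq_bigr => J _; rewrite count_sorted_block.
Qed.

Lemma blocks_seq_setU1 I P D : partition (I |: P) D -> I \notin P ->
  {in P, forall J, block_key I < block_key J} ->
  blocks_seq (I |: P) = I :: blocks_seq P.
Proof.
move=> partIP IP keyI.
rewrite /blocks_seq.
transitivity (sort (fun J J' => block_key J <= block_key J') (I :: blocks_seq P)).
  apply/perm_sort_inP.
  - by move=> J J' _ _; exact: leq_total.
  - by move=> J J' J'' _ _ _; exact: leq_trans.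
  - move=> J J'; rewrite !mem_enum => JP J'P key_JJ'.
    by apply: (block_key_inj partIP) => //; apply/eqP; rewrite eqn_leq.
  apply: uniq_perm; rewrite /= /blocks_seq ?sort_uniq ?enum_uniq ?mem_sort ?mem_enum ?IP //.
  by move=> J; rewrite mem_enum in_setU1 in_cons mem_sort mem_enum.
apply: sorted_sort => /=; first by move=> J J' J''; exact: leq_trans.
rewrite path_min_sorted; first by apply: sort_sorted => J J'; exact: leq_total.
by apply/allP => J; rewrite /blocks_seq mem_sort mem_enum => /keyI /ltnW.
Qed.

Lemma one_line_setU1 I P D : partition (I |: P) D -> I \notin P ->
  {in P, forall J, block_key I < block_key J} ->
  one_line (I |: P) = sorted_block I ++ one_line P.
Proof. by move=> partIP IP keyI; rewrite /one_line (blocks_seq_setU1 partIP). Qed.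
End Blocks.

Lemma partitionU1D (T : finType) (A I : {set T}) P :
  I != set0 -> I \subset A -> partition P (A :\: I) ->
  partition (I |: P) A /\ I \notin P.
Proof.
move=> I0 IA partP.
have disjI : [disjoint I & A :\: I].
  by rewrite -setI_eq0 setIDA setDE setIAC setICr set0I.
have IUA : I :|: A :\: I = A.
  by apply/setP => i; rewrite !inE; case: (boolP (i \in I)) => // /(subsetP IA).
split; first by rewrite -[in X in partition _ X]IUA partitionU1.
apply: contra I0 => IP; have := partitionS partP IP.
by rewrite subsetD -setI_eq0 setIid => /andP[].
Qed.

Import GRing.Theory.
Local Open Scope ring_scope.

Section Expansion.
Variables (K : fieldType) (n m : nat).
Implicit Types (I J : {set 'I_n}) (P : {set {set 'I_n}}).

Definition mpartition P (A : {set 'I_n}) : bool :=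
  partition P A && [forall I in P, #|I| == m].

(* The sign of the permutation of A listing I first and then A :\: I. *)
Definition block_sgn (A I : {set 'I_n}) : K :=
  (-1) ^+ (ninv (sorted_block I) + cross (sorted_block I) [seq val i | i in A :\: I]).

Variables (A : {set 'I_n}) (a0 : 'I_n).
Hypotheses (a0A : a0 \in A) (a0_min : {in A, forall i, (val a0 <= val i)%N}).

Lemma mpartition_setU1 I P : a0 \in I -> I \subset A -> #|I| = m ->
  mpartition (I |: P) A && (pblock (I |: P) a0 == I) && ((I |: P) :\ I == P) =
  mpartition P (A :\: I).
Proof.
move=> a0I IA cardI; have I0 : I != set0 by apply/set0Pn; exists a0.
apply/andP/andP => [[/andP[/andP[partIP /forallP cardP] _] /eqP <-] | [partP /forallP cardP]].
  split; first exact: partitionD1 partIP (setU11 I P).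
  by apply/forallP => J; apply/implyP => /setD1P[_ /(implyP (cardP J))].
have [partIP IP] := partitionU1D I0 IA partP.
split; last by rewrite setU1K.
rewrite (def_pblock (partition_trivIset partIP) (setU11 I P) a0I) eqxx andbT.
apply/andP; split => //; apply/forallP => J; apply/implyP.
by case/setU1P => [-> | /(implyP (cardP J))//]; rewrite cardI.
Qed.

Lemma part_sgn_setU1 I P : a0 \in I -> I \subset A -> partition P (A :\: I) ->
  part_sgn K (I |: P) = block_sgn A I * part_sgn K P.
Proof.
move=> a0I IA partP; have I0 : I != set0 by apply/set0Pn; exists a0.
have [partIP IP] := partitionU1D I0 IA partP.
have keyI : {in P, forall J, (block_key I < block_key J)%N}.
  move=> J JP; have [j jJ ->] := block_key_mem (partition_neq0 partP JP).
  have /setDP[jA jI] := subsetP (partitionS partP JP) j jJ.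
  apply: leq_ltn_trans (block_key_min a0I) _; rewrite ltn_neqAle a0_min // andbT.
  by apply: contraNneq jI => /val_inj <-.
rewrite /part_sgn (one_line_setU1 partIP IP keyI) ninv_cat.
by rewrite (cross_perm_r _ (one_line_perm partP)) /block_sgn !exprD mulrAC.
Qed.

Lemma hpf_expand_min (x : {ffun {set 'I_n} -> K}) :
  hpf m A x = \sum_(I : {set 'I_n} | [&& a0 \in I, I \subset A & #|I| == m])
                 block_sgn A I * x I * hpf m (A :\: I) x.
Proof.
rewrite /hpf (partition_big (pblock^~ a0)
  (fun I : {set 'I_n} => [&& a0 \in I, I \subset A & #|I| == m])).
  apply: eq_bigr => I /and3P[a0I IA /eqP cardI].
  have I0 : I != set0 by apply/set0Pn; exists a0.
  rewrite (reindex_onto (fun P => I |: P) (fun P => P :\ I)) /=; last first.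
    move=> P /andP[/andP[partP _] /eqP <-]; apply: setD1K; apply: pblock_mem.
    by rewrite (cover_partition partP).
  rewrite big_distrr /=; apply: eq_big => P; first exact: mpartition_setU1.
  rewrite (mpartition_setU1 _ a0I IA cardI) => /andP[partP _].
  have [_ IP] := partitionU1D I0 IA partP.
  by rewrite big_setU1 //= part_sgn_setU1 // mulrACA.
move=> P /andP[partP /forallP cardP].
have a0P : a0 \in cover P by rewrite (cover_partition partP).
rewrite mem_pblock a0P (implyP (cardP _)) ?pblock_mem // andbT.
apply/subsetP => i ip; rewrite -(cover_partition partP).
by apply/bigcupP; exists (pblock P a0) => //; exact: pblock_mem.
Qed.
End Expansion.

Lemma HPf_succ (K : fieldType) (n m k : nat) (x : {ffun {set 'I_n} -> K}) :
  (0 < m)%N -> HPf m k x -> HPf m k.+1 x.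
Proof.
move=> m_gt0 hpfx A cardA.
have /card_gt0P[i0 i0A] : (0 < #|A|)%N by rewrite cardA muln_gt0 m_gt0.
have [a0 a0A a0_min] := arg_minnP (fun i : 'I_n => val i) i0A.
rewrite (hpf_expand_min m a0A a0_min) big1 // => I /and3P[_ IA /eqP cardI].
by rewrite hpfx ?mulr0 // cardsD (setIidPr IA) cardI cardA mulnS addKn.
Qed.

Theorem lemma3p16 (K : fieldType) (n m l : nat) :
  (2 <= m)%N -> ~~ odd m -> (1 <= l)%N ->
  forall x : {ffun {set 'I_n} -> K}, HPf m l x -> HPf m l.+1 x.
Proof. by move=> m_ge2 _ _ x; apply: HPf_succ; exact: ltnW. Qed.
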